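(* For all integers $n\ge0$ and $d\ge1$ there is an $(n+1)\times(n+1)$ real matrix $M$, with rows and columns indexed by $\{0,1,\dots,n\}$, such that $\gamma_2(M)\le d$ and $M_{st}=s-t$ for all $s,t\in\{0,\dots,n\}$ with $|s-t|\le d$.
   Context: For a real matrix $A$, $\gamma_2(A)=\min\{c(X)c(Y): X^{\mathsf T}Y=A\}$, where $c(X)$ denotes the maximum Euclidean norm of a column of $X$. *)

From HB Require Import structures.
From mathcomp Require Import all_boot all_order all_algebra.
From mathcomp Require Import all_classical all_reals.
Set Implicit Arguments. Unset Strict Implicit. Unset Printing Implicit Defensive.
Import Order.TTheory GRing.Theory Num.Theory.
Local Open Scope ring_scope.
Local Open Scope classical_set_scope.

(* c(X): maximum Euclidean norm of a column of X : 'M_(k, m). (0 if m = 0.) *)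
Definition colnorm_max (R : realType) (k m : nat) (X : 'M[R]_(k, m)) : R :=
  \big[Num.max/0]_(j < m) Num.sqrt (\sum_(i < k) X i j ^+ 2).

Definition gamma2_values (R : realType) (m n : nat) (A : 'M[R]_(m, n)) : set R :=
  [set r | exists k (X : 'M[R]_(k, m)) (Y : 'M[R]_(k, n)),
             X^T *m Y = A /\ r = colnorm_max X * colnorm_max Y].

(* gamma_2(A) = min (here: inf, the minimum is attained) of that set. *)
Definition gamma2 (R : realType) (m n : nat) (A : 'M[R]_(m, n)) : R :=
  inf (gamma2_values A).

From mathcomp Require Import all_boot all_order all_algebra.
From mathcomp Require Import all_classical all_reals.
From mathcomp Require Import zify ring.
Import Order.TTheory GRing.Theory Num.Theory.
Local Open Scope ring_scope.

(* Let w be the +-1 square wave of half-period p = 2d: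
   w m = (-1)^(m / p), so w (m + p) = - w m.  Factor M = X^T Y with
   2d-row matrices X j s = w (s + j) and Y j t = w (t + d + j) / 2.
   - Every column of X has squared norm 2d and every column of Y has squared
     norm 2d / 4, hence gamma_2(M) <= sqrt(2d) sqrt(d / 2) = d.
   - For r = t + d - s, the product m |-> w m * w (m + r) is p-periodic, so its
     sum over any window of length p equals its sum over [0, p); there
     w j = 1 and w (j + r) changes sign at j = p - r, which gives the
     autocorrelation p - 2r.  Hence M s t = (2d - 2r) / 2 = s - t whenever
     0 <= r <= 2d, i.e. whenever |s - t| <= d.
   The file proves the window-shift lemma for periodic sums, the square-wave
   autocorrelation, the basic bounds on gamma_2, and then the theorem. *)

Lemma sum_periodic_shift (V : zmodType) (N : nat) (f : nat -> V) :
  (forall m, f (m + N)%N = f m) ->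
  forall a, \sum_(j < N) f (a + j)%N = \sum_(j < N) f j.
Proof.
move=> f_per; elim=> [|a IHa]; first by [].
have window : f a + \sum_(j < N) f (a.+1 + j)%N = \sum_(j < N) f (a + j)%N + f a.
  rewrite -[in RHS](f_per a).
  rewrite -(big_ord_recr N (fun j : 'I_N.+1 => f (a + j)%N)) big_ord_recl addn0.
  by congr (_ + _); apply: eq_bigr => j _; rewrite addSnnS.
by rewrite -IHa; apply: (addrI (f a)); rewrite window addrC.
Qed.

Section SquareWave.
Variables (R : pzRingType) (p : nat).
Hypothesis p_gt0 : (0 < p)%N.

Definition sqwave (m : nat) : R := (-1) ^+ (m %/ p).

Lemma sqwave_antiperiodic m : sqwave (m + p) = - sqwave m.
Proof. by rewrite /sqwave divnDr // divnn p_gt0 addn1 exprS mulN1r. Qed.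

(* Entries are +-1, so each column of the factors has squared norm = rows. *)
Lemma sqwave_sqr m : sqwave m ^+ 2 = 1.
Proof. exact: sqrr_sign. Qed.

Lemma sqwave_low m : (m < p)%N -> sqwave m = 1.
Proof. by move=> m_lt; rewrite /sqwave divn_small. Qed.

Lemma sqwave_high m : (p <= m < p + p)%N -> sqwave m = -1.
Proof.
case/andP=> p_le m_lt; rewrite -(subnK p_le) sqwave_antiperiodic sqwave_low //.
by rewrite ltn_subLR.
Qed.

Lemma sqwave_autocorr r : (r <= p)%N ->
  \sum_(j < p) sqwave j * sqwave (j + r) = p%:R - r%:R - r%:R.
Proof.
move=> r_le; rewrite -(big_mkord xpredT (fun j => sqwave j * sqwave (j + r))).
rewrite (big_cat_nat (n := p - r)) ?leq_subr //=.
rewrite (eq_big_nat _ _ (F2 := fun=> 1)); last first.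
  by move=> j /andP[_ j_lt]; rewrite !sqwave_low ?mul1r //; lia.
rewrite [X in _ + X](eq_big_nat _ _ (F2 := fun=> -1)); last first.
  by move=> j /andP[j_ge j_lt]; rewrite sqwave_low // sqwave_high ?mul1r //; lia.
rewrite !sumr_const_nat subn0 (_ : p - (p - r) = r)%N; last lia.
by rewrite natrB // -mulNrn.
Qed.

(* The same autocorrelation over any window of length p: the product of the
   wave with its lagged copy is p-periodic, the two sign flips cancelling. *)
Lemma sqwave_window_autocorr a r : (r <= p)%N ->
  \sum_(j < p) sqwave (a + j) * sqwave (a + j + r) = p%:R - r%:R - r%:R.
Proof.
move=> r_le; rewrite -sqwave_autocorr //.
apply: (@sum_periodic_shift _ p (fun m => sqwave m * sqwave (m + r))) => m.
by rewrite addnAC !sqwave_antiperiodic mulrNN.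
Qed.

End SquareWave.

Lemma colnorm_max_ge0 {R : realType} {k m : nat} (X : 'M[R]_(k, m)) :
  0 <= colnorm_max X.
Proof.
rewrite /colnorm_max; elim/big_ind: _ => // [x y x_ge0 y_ge0|j _].
  by rewrite le_max x_ge0.
exact: sqrtr_ge0.
Qed.

Lemma colnorm_max_le {R : realType} {k m : nat} (X : 'M[R]_(k, m)) c :
  (forall j, \sum_(i < k) X i j ^+ 2 <= c) -> colnorm_max X <= Num.sqrt c.
Proof.
move=> col_le; apply: bigmax_le => [|j _]; first exact: sqrtr_ge0.
exact/ler_wsqrtr/col_le.
Qed.

Lemma gamma2_le_factorization {R : realType} {m n k : nat}
    (X : 'M[R]_(k, m)) (Y : 'M[R]_(k, n)) :
  gamma2 (X^T *m Y) <= colnorm_max X * colnorm_max Y.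
Proof.
apply: ge_inf; last by exists k, X, Y.
exists 0 => _ [k' [X' [Y' [_ ->]]]].
by rewrite mulr_ge0 ?colnorm_max_ge0.
Qed.

Lemma gamma2_le_sqrt {R : realType} {m n k : nat}
    (X : 'M[R]_(k, m)) (Y : 'M[R]_(k, n)) (a b : R) :
  0 <= a -> (forall j, \sum_(i < k) X i j ^+ 2 <= a) ->
  (forall j, \sum_(i < k) Y i j ^+ 2 <= b) ->
  gamma2 (X^T *m Y) <= Num.sqrt (a * b).
Proof.
move=> a_ge0 colX colY; rewrite sqrtrM //.
apply: (le_trans (gamma2_le_factorization X Y)).
by apply: ler_pM; rewrite ?colnorm_max_ge0 ?colnorm_max_le.
Qed.

Theorem lemma4p18 (R : realType) (n d : nat) (hd : (1 <= d)%N) :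
  exists M : 'M[R]_(n.+1, n.+1),
    gamma2 M <= d%:R /\
    forall s t : 'I_(n.+1),
      (`|(s%:Z - t%:Z)%R| <= d%:Z)%R -> M s t = s%:R - t%:R.
Proof.
have p_gt0 : (0 < 2 * d)%N by lia.
pose w := sqwave R (2 * d)%N.
pose X : 'M[R]_(2 * d, n.+1) := \matrix_(j, s) w (s + j)%N.
pose Y : 'M[R]_(2 * d, n.+1) := \matrix_(j, t) (2^-1 * w (t + d + j)%N).
exists (X^T *m Y); split.
  have norms : (2 * d)%N%:R * ((2 * d)%N%:R * 2^-1 ^+ 2) = (d%:R : R) ^+ 2.
    by rewrite natrM; field.
  rewrite -[leRHS]ger0_norm ?ler0n // -sqrtr_sqr -norms.
  apply: gamma2_le_sqrt => [|j|j]; first exact: ler0n.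
    under eq_bigr do rewrite mxE sqwave_sqr.
    by rewrite sumr_const card_ord.
  under eq_bigr do rewrite mxE exprMn sqwave_sqr mulr1.
  by rewrite sumr_const card_ord mulr_natl.
move=> s t; rewrite ler_norml => /andP[st_ge st_le].
pose r := (t + d - s)%N.
have r_le : (r <= 2 * d)%N by lia.
have entry : (X^T *m Y) s t = 2^-1 * \sum_(j < (2 * d)%N) w (s + j)%N * w (s + j + r)%N.
  rewrite !mxE mulr_sumr; apply: eq_bigr => j _; rewrite !mxE mulrCA.
  by congr (_ * (_ * w _)); rewrite /r; lia.
rewrite entry sqwave_window_autocorr // /r natrB; last lia.
by rewrite natrM (natrD _ t d); field.
Qed.
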